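(* Let $r\ge2$ and let $\mathcal{P}$ be a set of $r$-patterns. Suppose there are constants $C>0$ and $0\le x<r$ such that $a_{\mathcal P}(k)\le C^{k}k^{kx}$ for all $k\ge2$. Then there is a constant $C''>0$ such that a.a.s. $z_{\mathcal{P}}(\mathbb{RM}^{(r)}_{n})\le C'' n^{1/(r-x)}$.
   Context: An ordered $r$-matching of size $k$ is a set of $k$ pairwise disjoint $r$-element subsets (edges) of a linearly ordered vertex set of size $rk$; $\mathcal{M}^{(r)}_k$ is the set of all ordered $r$-matchings on $[rk]$ and $\mathbb{RM}^{(r)}_n$ is a uniformly random element of $\mathcal{M}^{(r)}_n$. An $r$-pattern is an ordered $r$-matching of size 2 (written as a word over $\{A,B\}$, each letter $r$ times). Two edges form pattern $P$ if they induce a matching order-isomorphic to $P$. For a set $\mathcal P$ of $r$-patterns, a $\mathcal P$-clique is an ordered matching all of whose pairs of edges form patterns in $\mathcal P$; $z_{\mathcal P}(M)$ is the largest size of a $\mathcal P$-clique contained in $M$; $a_{\mathcal P}(k)$ is the number of $\mathcal P$-cliques in $\mathcal{M}^{(r)}_k$. ''A.a.s.'' means with probability tending to 1 as $n\to\infty$. *)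

From Stdlib Require Import Reals.
From mathcomp Require Import all_boot.
Set Implicit Arguments. Unset Strict Implicit. Unset Printing Implicit Defensive.

(* An ordered r-matching of size k: a partition of [rk] = 'I_(r*k) (ordered by
   the natural order of ordinals) into blocks (edges) of size exactly r. *)
Definition is_matching (r k : nat) (M : {set {set 'I_(r * k)}}) : bool :=
  partition M [set: 'I_(r * k)] && [forall e in M, #|e| == r].

(* Edges e, f (on the ordered vertex set 'I_N) form the r-pattern P (a matching
   on 'I_(r*2)) iff, via the unique order isomorphism g : 'I_(r*2) -> e :|: f,
   the induced matching {g^-1(e), g^-1(f)} equals P. *)
Definition forms_pattern (r N : nat) (P : {set {set 'I_(r * 2)}})
    (e f : {set 'I_N}) : bool :=
  [exists g : {ffun 'I_(r * 2) -> 'I_N},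
    [&& [forall i : 'I_(r * 2), forall j : 'I_(r * 2), (i < j)%N ==> (g i < g j)%N],
        e :|: f == [set g i | i : 'I_(r * 2)]
      & P == [set g @^-1: e; g @^-1: f]]].

Definition is_clique (r N : nat) (Pats : {set {set {set 'I_(r * 2)}}})
    (S : {set {set 'I_N}}) : bool :=
  [forall e in S, forall f in S,
     (e != f) ==> [exists P in Pats, forms_pattern P e f]].

Definition zP (r N : nat) (Pats : {set {set {set 'I_(r * 2)}}})
    (M : {set {set 'I_N}}) : nat :=
  \max_(S : {set {set 'I_N}} | (S \subset M) && is_clique Pats S) #|S|.

Definition aP (r : nat) (Pats : {set {set {set 'I_(r * 2)}}}) (k : nat) : nat :=
  #|[set M : {set {set 'I_(r * k)}} | is_matching M && is_clique Pats M]|.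

Definition prob_RM (r n : nat) (Q : {set {set 'I_(r * n)}} -> bool) : R :=
  Rdiv (INR #|[set M : {set {set 'I_(r * n)}} | is_matching M && Q M]|)
   (INR #|[set M : {set {set 'I_(r * n)}} | is_matching M]|).

Definition Rleb (a b : R) : bool := if Rle_dec a b then true else false.

From Stdlib Require Import Reals ZArith Lra Lia.
From mathcomp Require Import all_boot zify.
Set Implicit Arguments. Unset Strict Implicit. Unset Printing Implicit Defensive.

(* First moment method. A P-clique of size k inside a matching of [rn] is a set
   of k disjoint edges; relabelling its rk vertices increasingly turns it into a
   P-clique matching of [rk], so there are at most C(rn, rk) a_P(k) of them, and
   each lies in |M_(n-k)| matchings, where |M_n| n! (r!)^n = (rn)!.  Hence
   P(z_P >= k) <= a_P(k) (r!)^k n^k / (rk)! <= (D n / k^(r-x))^k, with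
   D = C r! 3^r / r^r, using (m/3)^m <= m!.  Choosing k just above
   t = C'' n^(1/(r-x)), where t^(r-x) = 2 D n, this is at most 2^-k <= 1/t. *)

Lemma leq_card_in_inj (T U : finType) (A : {set T}) (B : {set U}) (f : T -> U) :
  {in A &, injective f} -> {in A, forall x, f x \in B} -> #|A| <= #|B|.
Proof.
move=> f_inj fAB; rewrite -(card_in_imset f_inj); apply: subset_leq_card.
by apply/subsetP => _ /imsetP [x xA ->]; exact: fAB.
Qed.

Section UniformPartitions.
Variables (T : finType) (r : nat).
Implicit Types (a : T) (A e : {set T}) (M S : {set {set T}}).

Definition uniform_partitions A :=
  [set M : {set {set T}} | partition M A && [forall e in M, #|e| == r]].

Definition blocks_through a A :=
  [set e : {set T} | [&& a \in e, e \subset A & #|e| == r]].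

Lemma cover_setD M S : trivIset M -> S \subset M ->
  cover (M :\: S) = cover M :\: cover S.
Proof.
move=> tM sSM; apply/setP => y; apply/bigcupP/setDP.
- move=> [e /setDP [eM eS] ye]; split; first by apply/bigcupP; exists e.
  apply/bigcupP => [[f fS yf]].
  have fM := subsetP sSM f fS.
  have [ef | nef] := eqVneq e f; first by rewrite ef fS in eS.
  by move: (trivIsetP tM e f eM fM nef) => /disjointFr/(_ ye); rewrite yf.
- move=> [/bigcupP [e eM ye] nS]; exists e => //; apply/setDP; split => //.
  by apply: contra nS => eS; apply/bigcupP; exists e.
Qed.

Lemma partition_setD M S A : partition M A -> S \subset M ->
  partition (M :\: S) (A :\: cover S).
Proof.
move=> pM sSM; have tM := partition_trivIset pM.
rewrite /partition cover_setD // (cover_partition pM) eqxx.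
by rewrite (trivIsetS (subsetDl M S) tM) in_setD (partition0 pM) andbF.
Qed.

Lemma uniform_partitionsD M S A : M \in uniform_partitions A -> S \subset M ->
  M :\: S \in uniform_partitions (A :\: cover S).
Proof.
rewrite !inE => /andP [pM /forall_inP sz] sSM.
rewrite partition_setD //=; apply/forall_inP => e /setDP [eM _]; exact: sz.
Qed.

Lemma uniform_partitionsU1 M A e : e != set0 -> e \subset A -> #|e| = r ->
  M \in uniform_partitions (A :\: e) -> e |: M \in uniform_partitions A.
Proof.
move=> e0 eA ce; rewrite !inE => /andP [pM /forall_inP sz].
have dj : [disjoint e & A :\: e] by rewrite disjoints_subset setCD subsetUr.
have -> : A = e :|: A :\: e.
  by apply/setP => y; rewrite !inE; case: (boolP (y \in e)) => // /(subsetP eA).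
rewrite (partitionU1 pM e0 dj) /=.
by apply/forall_inP => f /setU1P [-> | /sz //]; rewrite ce.
Qed.

Lemma card_uniform_partitions_pblock A e a : a \in e -> e \subset A -> #|e| = r ->
  #|[set M in uniform_partitions A | pblock M a == e]| =
  #|uniform_partitions (A :\: e)|.
Proof.
move=> ae eA ce; have aA := subsetP eA a ae.
have e_in M : M \in uniform_partitions A -> pblock M a = e -> e \in M.
  by rewrite inE => /andP [pM _] <-; rewrite pblock_mem // (cover_partition pM).
have e_notin M : M \in uniform_partitions (A :\: e) -> e \notin M.
  rewrite inE => /andP [pM _]; apply/negP => /(partitionS pM) /subsetP/(_ a ae).
  by rewrite inE ae.
apply/eqP; rewrite eqn_leq; apply/andP; split.
- apply: (@leq_card_in_inj _ _ _ _ (fun M => M :\ e)).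
  + move=> M1 M2; rewrite inE => /andP [p1 /eqP b1].
    rewrite inE => /andP [p2 /eqP b2] h.
    by rewrite -(setD1K (e_in _ p1 b1)) -(setD1K (e_in _ p2 b2)) h.
  + move=> M; rewrite inE => /andP [pM /eqP bM].
    have := uniform_partitionsD pM (_ : [set e] \subset M).
    by rewrite cover1; apply; rewrite sub1set e_in.
- apply: (@leq_card_in_inj _ _ _ _ (fun M => e |: M)).
  + move=> M1 M2 p1 p2 h.
    by rewrite -(setU1K (e_notin _ p1)) -(setU1K (e_notin _ p2)) h.
  + move=> M pM; have e0 : e != set0 by apply/set0Pn; exists a.
    have pU := uniform_partitionsU1 e0 eA ce pM.
    rewrite inE pU; move: pU; rewrite inE => /andP [pU _].
    by apply/eqP/def_pblock; [exact: partition_trivIset pU | exact: setU11 |].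
Qed.

Lemma card_uniform_partitions_rec A a : a \in A ->
  #|uniform_partitions A| =
  \sum_(e in blocks_through a A) #|uniform_partitions (A :\: e)|.
Proof.
move=> aA; rewrite -sum1_card.
rewrite (partition_big (fun M => pblock M a) (fun e => e \in blocks_through a A)).
  apply: eq_bigr => e; rewrite inE => /and3P [ae eA /eqP ce].
  rewrite -(card_uniform_partitions_pblock ae eA ce) -sum1_card.
  by apply: eq_bigl => M; rewrite inE.
move=> M; rewrite inE => /andP [pM /forall_inP sz].
have aM : a \in cover M by rewrite (cover_partition pM).
by rewrite inE mem_pblock aM (partitionS pM (pblock_mem aM)) sz // pblock_mem.
Qed.

Lemma card_blocks_through A a : 0 < r -> a \in A ->
  #|blocks_through a A| = 'C(#|A|.-1, r.-1).
Proof.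
move=> r0 aA; rewrite (cardsD1 a A) aA -cards_draws.
apply/eqP; rewrite eqn_leq; apply/andP; split.
- apply: (@leq_card_in_inj _ _ _ _ (fun e => e :\ a)).
  + move=> e1 e2; rewrite !inE => /and3P [a1 _ _] /and3P [a2 _ _] h.
    by rewrite -(setD1K a1) -(setD1K a2) h.
  + move=> e; rewrite !inE => /and3P [ae eA /eqP ce].
    by rewrite setSD //=; move: (cardsD1 a e); rewrite ae ce => ->.
- have a_notin (B : {set T}) : B \subset A :\ a -> a \notin B.
    by move=> sB; apply/negP => /(subsetP sB); rewrite !inE eqxx.
  apply: (@leq_card_in_inj _ _ _ _ (fun B => a |: B)).
  + move=> B1 B2; rewrite !inE => /andP [s1 _] /andP [s2 _] h.
    by rewrite -(setU1K (a_notin _ s1)) -(setU1K (a_notin _ s2)) h.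
  + move=> B; rewrite !inE => /andP [sB /eqP cB].
    rewrite eqxx cardsU1 a_notin // cB add1n prednK // eqxx andbT /=.
    by rewrite subUset sub1set aA (subset_trans sB) // subsetDl.
Qed.

Lemma card_uniform_partitions m A : 0 < r -> #|A| = r * m ->
  #|uniform_partitions A| * (m`! * r`! ^ m) = (r * m)`!.
Proof.
move=> r0; elim: m A => [|m IH] A cA.
  rewrite muln0 in cA; rewrite (cards0_eq cA) muln0.
  have -> : uniform_partitions set0 = [set set0].
    apply/setP => M; rewrite !inE partition_set0; apply: andb_idr.
    by move/eqP => ->; apply/forall_inP => e; rewrite inE.
  by rewrite cards1.
have [a aA] : {a | a \in A} by apply/sigW/card_gt0P; rewrite cA muln_gt0 r0.
have sum_eq : #|uniform_partitions A| * (m`! * r`! ^ m) =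
    #|blocks_through a A| * (r * m)`!.
  rewrite (card_uniform_partitions_rec aA) big_distrl -sum_nat_const.
  apply: eq_bigr => e; rewrite inE => /and3P [_ eA /eqP ce]; apply: IH.
  by rewrite cardsD (setIidPr eA) cA ce mulnS addKn.
rewrite card_blocks_through // cA in sum_eq.
move: sum_eq; case: r r0 => // s _.
have -> : s.+1 * m.+1 = (s.+1 * m + s).+1 by rewrite mulnS addnC addnS.
move=> /= sum_eq.
rewrite [((s.+1 * m + s).+1)`!]factS -(bin_fact (leq_addl (s.+1 * m) s)) addnK.
rewrite [m.+1`!]factS expnS {1}[s.+1`!]factS.
have -> : #|uniform_partitions A| * (m.+1 * m`! * (s.+1 * s`! * (s.+1)`! ^ m)) =
    m.+1 * s.+1 * s`! * (#|uniform_partitions A| * (m`! * (s.+1)`! ^ m)) by lia.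
rewrite sum_eq; lia.
Qed.

End UniformPartitions.

Section EnumAt.
Variables (N : nat) (d : 'I_N) (m : nat) (V : {set 'I_N}).

(* The i-th smallest element of V; the default d is only reached if #|V| < m. *)
Definition enum_at (i : 'I_m) : 'I_N := nth d (enum V) i.

Hypothesis cardV : #|V| = m.

Lemma ltn_enum_at : {mono enum_at : i j / i < j}.
Proof.
have sortedV : sorted ltn (map val (enum V)).
  rewrite -[enum _](eq_filter (mem_enum _)).
  rewrite -(eq_filter (mem_map val_inj _)) -filter_map.
  by rewrite (sorted_filter ltn_trans) // unlock val_ord_enum iota_ltn_sorted.
have incr (i j : 'I_m) : i < j -> enum_at i < enum_at j.
  move=> ij; rewrite /enum_at -!(nth_map d 0) ?size_map -?cardE ?cardV //.
  by apply: (sorted_ltn_nth ltn_trans) => //; rewrite inE size_map -cardE cardV.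
move=> i j; apply/idP/idP => [|/incr //].
apply: contraLR; rewrite -!leqNgt leq_eqVlt.
by case/orP => [/eqP/val_inj -> // | /incr /ltnW].
Qed.

Lemma enum_at_inj : injective enum_at.
Proof.
move=> i j eij; apply/val_inj.
by case: (ltngtP i j) => // ; rewrite -ltn_enum_at eij ltnn.
Qed.

Lemma enum_at_mem i : enum_at i \in V.
Proof. by rewrite -mem_enum mem_nth // -cardE cardV. Qed.

Lemma enum_atP y : y \in V -> {i | enum_at i = y}.
Proof.
move=> yV; have lt : index y (enum V) < m by rewrite -cardV cardE index_mem mem_enum.
by exists (Ordinal lt); rewrite /enum_at nth_index ?mem_enum.
Qed.

Lemma imset_enum_at_preimset (e : {set 'I_N}) :
  e \subset V -> enum_at @: (enum_at @^-1: e) = e.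
Proof.
move=> eV; apply/setP => y; apply/imsetP/idP => [[i] | ye]; first by rewrite inE => ? ->.
by have [i iy] := enum_atP (subsetP eV y ye); exists i; rewrite ?inE iy.
Qed.

Lemma imset_enum_atT : enum_at @: setT = V.
Proof.
apply/setP => y; apply/imsetP/idP => [[i _ ->] | /enum_atP [i <-]]; last by exists i.
exact: enum_at_mem.
Qed.

Lemma forms_pattern_preimset r (P : {set {set 'I_(r * 2)}}) (e f : {set 'I_N}) :
  e \subset V -> f \subset V -> forms_pattern P e f ->
  forms_pattern P (enum_at @^-1: e) (enum_at @^-1: f).
Proof.
move=> eV fV /existsP [g /and3P [/forallP g_incr /eqP g_im /eqP g_pat]].
have g_in i : g i \in V.
  have : g i \in e :|: f by rewrite g_im imset_f.
  by rewrite inE => /orP [/(subsetP eV) | /(subsetP fV)].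
pose g' := [ffun i => sval (enum_atP (g_in i))].
have g'K i : enum_at (g' i) = g i by rewrite ffunE; case: enum_atP.
apply/existsP; exists g'; apply/and3P; split.
- apply/forallP => i; apply/forallP => j; apply/implyP => ij.
  by rewrite -ltn_enum_at !g'K; move/forallP: (g_incr i) => /(_ j) /implyP; apply.
- apply/eqP/setP => y; rewrite !inE; apply/idP/imsetP.
    rewrite -in_setU g_im => /imsetP [i _ yi]; exists i => //.
    by apply: enum_at_inj; rewrite g'K.
  by move=> [i _ ->]; rewrite g'K -in_setU g_im imset_f.
- by rewrite g_pat; apply/eqP; congr [set _; _]; apply/setP => i; rewrite !inE g'K.
Qed.

End EnumAt.

Section Cliques.
Variables (r : nat) (Pats : {set {set {set 'I_(r * 2)}}}).

Definition partial_cliques N k : {set {set {set 'I_N}}} :=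
  [set S : {set {set 'I_N}} |
    [&& #|S| == k, [forall e in S, #|e| == r], trivIset S & is_clique Pats S]].

Lemma is_clique_subset N (S S' : {set {set 'I_N}}) :
  S \subset S' -> is_clique Pats S' -> is_clique Pats S.
Proof.
move=> sSS' /forall_inP clS'; apply/forall_inP => e eS; apply/forall_inP => f fS.
by move/forall_inP: (clS' e (subsetP sSS' e eS)); apply; exact: subsetP sSS' f fS.
Qed.

Lemma zP_geP N (M : {set {set 'I_N}}) k : k <= zP Pats M ->
  exists2 S : {set {set 'I_N}}, S \subset M & is_clique Pats S && (#|S| == k).
Proof.
have [S0 /andP [sS0M clS0] ->] :
    {S0 : {set {set 'I_N}} | (S0 \subset M) && is_clique Pats S0 & zP Pats M = #|S0| }.
  apply: eq_bigmax_cond; apply/card_gt0P; exists set0.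
  by rewrite unfold_in sub0set; apply/forall_inP => e; rewrite inE.
rewrite -bin_gt0 -cards_draws => /card_gt0P [S]; rewrite inE => /andP [sSS0 cS].
exists S; first exact: subset_trans sSS0 sS0M.
by rewrite cS (is_clique_subset sSS0 clS0).
Qed.

Hypothesis r_gt0 : 0 < r.

Lemma partition_cover_partial_clique N k S : S \in partial_cliques N k ->
  partition S (cover S) /\ #|cover S| = r * k.
Proof.
rewrite inE => /and4P [/eqP cS /forall_inP sz tS _].
have S0 : set0 \notin S.
  by apply/negP => /sz; rewrite cards0 eq_sym; apply/negP; rewrite -lt0n.
have pS : partition S (cover S) by rewrite /partition eqxx tS S0.
by rewrite (card_uniform_partition (fun e eS => eqP (sz e eS)) pS) cS mulnC.
Qed.

Section Relabel.
Variables (N : nat) (d : 'I_N) (k : nat).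

Definition relabel (S : {set {set 'I_N}}) : {set {set 'I_(r * k)}} :=
  [set enum_at d (cover S) @^-1: e | e : {set 'I_N} in S].

Variable S : {set {set 'I_N}}.
Hypothesis S_clique : S \in partial_cliques N k.

Lemma relabelK :
  [set enum_at d (cover S) @: B | B : {set 'I_(r * k)} in relabel S] = S.
Proof.
have [_ cardV] := partition_cover_partial_clique S_clique.
rewrite -imset_comp -[RHS]imset_id; apply: eq_in_imset => e eS /=.
by rewrite imset_enum_at_preimset // bigcup_sup.
Qed.

Lemma relabel_clique_matching : is_matching (relabel S) && is_clique Pats (relabel S).
Proof.
have [pS cardV] := partition_cover_partial_clique S_clique.
move: S_clique; rewrite inE => /and4P [_ /forall_inP sz _ /forall_inP clS].
have h_inj := enum_at_inj (d := d) cardV.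
have sub e : e \in S -> e \subset cover S by move=> eS; rewrite bigcup_sup.
apply/andP; split.
  rewrite /is_matching -(imset_partition _ _ h_inj) relabelK imset_enum_atT // pS.
  apply/forall_inP => _ /imsetP [e eS ->].
  by rewrite -(card_imset _ h_inj) imset_enum_at_preimset ?sub ?sz.
apply/forall_inP => _ /imsetP [e eS ->]; apply/forall_inP => _ /imsetP [f fS ->].
apply/implyP => nef; have {}nef : e != f by apply: contraNneq nef => ->.
move/forall_inP: (clS e eS) => /(_ f fS) /implyP /(_ nef) /exists_inP [P PP eP].
by apply/exists_inP; exists P => //; apply: forms_pattern_preimset; rewrite ?sub.
Qed.

End Relabel.

(* S is recovered from its vertex set and its increasing relabelling. *)
Lemma card_partial_cliques N k : 0 < N ->
  #|partial_cliques N k| <= 'C(N, r * k) * aP Pats k.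
Proof.
move=> N_gt0; pose d := Ordinal N_gt0.
rewrite -[X in 'C(X, _)](card_ord N) -card_draws /aP -cardsX.
apply: (@leq_card_in_inj _ _ _ _ (fun S => (cover S, relabel d k S))).
  move=> S1 S2 S1c S2c [cover12 relabel12].
  by rewrite -(relabelK d S1c) -(relabelK d S2c) cover12 relabel12.
move=> S Sc; have [_ cardV] := partition_cover_partial_clique Sc.
by rewrite !inE /= cardV eqxx; exact: relabel_clique_matching.
Qed.

End Cliques.

Lemma leq_card_sum_cover (T U : finType) (A : {set T}) (I : {set U}) (F : U -> {set T}) :
  {in A, forall a, exists2 i, i \in I & a \in F i} ->
  #|A| <= \sum_(i in I) #|F i|.
Proof.
move=> coverA; rewrite -sum1_card.
apply: (@leq_trans (\sum_(a in A) \sum_(i in I) (a \in F i : nat))).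
  apply: leq_sum => a aA; have [i iI ai] := coverA a aA.
  by rewrite (bigD1 i) //= ai leq_addr.
rewrite exchange_big /=; apply: leq_sum => i _.
rewrite -sum1_card big_mkcond [X in _ <= X]big_mkcond /=.
by apply: leq_sum => a _; case: (a \in A); case: (a \in F i).
Qed.

Lemma ffact_leq_expn n k : n ^_ k <= n ^ k.
Proof.
elim: k => [|k IH]; first by rewrite ffactn0.
by rewrite ffactnSr expnSr leq_mul // leq_subr.
Qed.

Section LargeCliques.
Variables (r : nat) (Pats : {set {set {set 'I_(r * 2)}}}).
Hypothesis r_gt0 : 0 < r.

Lemma card_matchings n :
  #|[set M : {set {set 'I_(r * n)}} | is_matching M]| * (n`! * r`! ^ n) = (r * n)`!.
Proof.
have cardT : #|[set: 'I_(r * n)]| = r * n by rewrite cardsT card_ord.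
by rewrite -(card_uniform_partitions r_gt0 cardT); congr (_ * _).
Qed.

Lemma card_matchings_gt0 n : 0 < #|[set M : {set {set 'I_(r * n)}} | is_matching M]|.
Proof.
have := card_matchings n; case: #|_| => //= eq0.
by have := fact_gt0 (r * n); rewrite -eq0.
Qed.

Lemma card_large_clique_matchings n k :
  #|[set M : {set {set 'I_(r * n)}} | is_matching M && (k <= zP Pats M)]|
  <= \sum_(S in partial_cliques Pats (r * n) k) #|uniform_partitions r (~: cover S)|.
Proof.
apply: (@leq_trans (\sum_(S in partial_cliques Pats (r * n) k)
   #|[set M : {set {set 'I_(r * n)}} | is_matching M && (S \subset M)]|)).
  apply: leq_card_sum_cover => M.
  rewrite inE => /andP [mM /zP_geP [S sSM /andP [clS cS]]].
  have /andP [pM /forall_inP szM] := mM; exists S.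
    rewrite inE cS clS (trivIsetS sSM (partition_trivIset pM)) /= andbT.
    by apply/forall_inP => e eS; apply: szM; exact: subsetP sSM e eS.
  by rewrite inE mM sSM.
apply: leq_sum => S _.
apply: (@leq_card_in_inj _ _ _ _ (fun M => M :\: S)).
  move=> M1 M2; rewrite !inE => /andP [_ s1] /andP [_ s2] h.
  by rewrite -(setID M1 S) -(setID M2 S) (setIidPr s1) (setIidPr s2) h.
move=> M; rewrite inE => /andP [mM sSM]; rewrite -setTD.
by apply: uniform_partitionsD sSM; rewrite inE.
Qed.

Lemma card_clique_completions n k S : S \in partial_cliques Pats (r * n) k ->
  #|uniform_partitions r (~: cover S)| * ((n - k)`! * r`! ^ (n - k)) = (r * (n - k))`!.
Proof.
move=> SCl; have [_ cardS] := partition_cover_partial_clique r_gt0 SCl.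
by apply: card_uniform_partitions; rewrite // cardsCs setCK card_ord cardS mulnBr.
Qed.

Lemma card_large_clique_matchings_le n k : 0 < n ->
  #|[set M : {set {set 'I_(r * n)}} | is_matching M && (k <= zP Pats M)]| * (r * k)`!
  <= aP Pats k * (r`! ^ k * n ^ k) * #|[set M : {set {set 'I_(r * n)}} | is_matching M]|.
Proof.
move=> n_gt0; have rn_gt0 : 0 < r * n by rewrite muln_gt0 r_gt0.
set cnt := #|_ : {set _}|; set tot := #|[set M | is_matching M]|.
set Cl := partial_cliques Pats (r * n) k.
have Cl_le := card_partial_cliques Pats r_gt0 k rn_gt0; rewrite -/Cl in Cl_le.
have cnt_le := card_large_clique_matchings n k; rewrite -/cnt -/Cl in cnt_le.
have [kn | nk] := leqP k n; last first.
  have /card0_eq Cl0 : #|Cl| = 0.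
    by apply/eqP; rewrite -leqn0 (leq_trans Cl_le) // bin_small ?ltn_pmul2l.
  by move: cnt_le; rewrite (eq_bigl _ _ Cl0) big_pred0_eq leqn0 => /eqP ->.
set W := (n - k)`! * r`! ^ (n - k).
have W_gt0 : 0 < W by rewrite muln_gt0 fact_gt0 expn_gt0 fact_gt0.
have sum_eq : (\sum_(S in Cl) #|uniform_partitions r (~: cover S)|) * W =
    #|Cl| * (r * (n - k))`!.
  rewrite big_distrl -sum_nat_const.
  by apply: eq_bigr => S; exact: card_clique_completions.
have bin_eq : 'C(r * n, r * k) * ((r * k)`! * (r * (n - k))`!) = (r * n)`!.
  by rewrite mulnBr bin_fact // leq_pmul2l.
have fact_le : n`! <= n ^ k * (n - k)`!.
  by rewrite -(ffact_fact kn) leq_mul2r ffact_leq_expn orbT.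
rewrite -(leq_pmul2r W_gt0).
apply: (@leq_trans (#|Cl| * (r * (n - k))`! * (r * k)`!)).
  by rewrite -sum_eq mulnAC !leq_mul2r cnt_le !orbT.
apply: (@leq_trans ('C(r * n, r * k) * aP Pats k * ((r * k)`! * (r * (n - k))`!))).
  by rewrite mulnAC -mulnA leq_mul2r Cl_le orbT.
have -> : 'C(r * n, r * k) * aP Pats k * ((r * k)`! * (r * (n - k))`!) =
    aP Pats k * ('C(r * n, r * k) * ((r * k)`! * (r * (n - k))`!)) by lia.
rewrite bin_eq -(card_matchings n) /W.
have -> : r`! ^ n = r`! ^ k * r`! ^ (n - k) by rewrite -expnD subnKC.
have -> : aP Pats k * (r`! ^ k * n ^ k) * tot * ((n - k)`! * r`! ^ (n - k)) =
    aP Pats k * (tot * (n ^ k * (n - k)`! * (r`! ^ k * r`! ^ (n - k)))) by lia.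
by rewrite !leq_mul2l leq_mul2r fact_le !orbT.
Qed.

End LargeCliques.

Local Open Scope R_scope.

Lemma INR_muln (a b : nat) : INR (a * b) = INR a * INR b.
Proof. exact: mult_INR. Qed.

Lemma INR_expn (a b : nat) : INR (a ^ b) = INR a ^ b.
Proof. by elim: b => [|b IH] //; rewrite expnS INR_muln IH. Qed.

(* Since (1 + 1/m)^m <= e <= 3. *)
Lemma pow_succ_le (m : nat) : INR m.+1 ^ m <= 3 * INR m ^ m.
Proof.
case: m => [|m]; first by rewrite /=; lra.
set M := INR m.+1; have M_gt0 : 0 < M by apply: lt_0_INR; apply/ltP.
have -> : INR m.+2 = M * (1 + / M) by rewrite S_INR -/M; field; lra.
rewrite Rpow_mult_distr Rmult_comm; apply: Rmult_le_compat_r.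
  by apply: pow_le; lra.
apply: (Rle_trans _ (exp (/ M) ^ m.+1)).
  apply: pow_incr; split; first by have := Rinv_0_lt_compat _ M_gt0; lra.
  by apply/Rlt_le/exp_ineq1/Rinv_neq_0_compat; lra.
rewrite -Rpower_pow; last exact: exp_pos.
rewrite /Rpower ln_exp -/M Rinv_r; [exact: exp_le_3 | lra].
Qed.

Lemma pow_le_fact (m : nat) : INR m ^ m <= 3 ^ m * INR m`!.
Proof.
elim: m => [|m IH]; first by rewrite /=; lra.
rewrite factS INR_muln -!tech_pow_Rmult.
have m1_ge0 : 0 <= INR m.+1 by apply: pos_INR.
apply: (Rle_trans _ (INR m.+1 * (3 * INR m ^ m))).
  exact: Rmult_le_compat_l (pow_succ_le m).
apply: (Rle_trans _ (INR m.+1 * (3 * (3 ^ m * INR m`!)))); last by right; ring.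
by apply: Rmult_le_compat_l => //; apply: Rmult_le_compat_l => //; lra.
Qed.

Lemma pow_div3_le_fact (m : nat) : (INR m / 3) ^ m <= INR m`!.
Proof.
have p3 : 0 < 3 ^ m by apply: pow_lt; lra.
rewrite /Rdiv Rpow_mult_distr pow_inv; apply: (Rmult_le_reg_l (3 ^ m)) => //.
by rewrite Rmult_comm Rmult_assoc Rinv_l ?Rmult_1_r; [exact: pow_le_fact | lra].
Qed.

Lemma pow_inv2_le_inv (k : nat) : (0 < k)%N -> (/ 2) ^ k <= / INR k.
Proof.
move=> k_gt0; rewrite pow_inv; apply: Rinv_le_contravar.
  by apply: lt_0_INR; apply/ltP.
have -> : 2 = INR 2 by rewrite /=; lra.
by rewrite -INR_expn; apply/le_INR/leP/ltnW/ltn_expl.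
Qed.

Lemma exists_nat_between (t : R) : 0 <= t -> exists k : nat, t < INR k <= t + 1.
Proof.
move=> t_ge0; have [up_gt up_le] := archimed t.
have up_pos : (0 < up t)%Z by apply: lt_IZR; lra.
exists (Z.to_nat (up t)); rewrite INR_IZR_INZ Z2Nat.id; [lra | lia].
Qed.

Lemma Rleb_INR_nat (z k : nat) (t : R) : t < INR k <= t + 1 ->
  Rleb (INR z) t = (z < k)%N.
Proof.
move=> [tk kt]; rewrite /Rleb; case: Rle_dec => zt.
  by apply/esym; rewrite ltnNge; apply/negP => /leP /le_INR; lra.
by apply/esym/negbTE/negP => /leP /le_INR; rewrite S_INR; lra.
Qed.

Lemma Rpower_INR_unbounded (b M : R) : 0 < b ->
  exists N : nat, forall n : nat, (N <= n)%N -> M < Rpower (INR n) b.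
Proof.
move=> b_gt0; set M' := Rmax 1 M.
have M'_gt0 : 0 < M' by have := Rmax_l 1 M; rewrite -/M'; lra.
have y_gt0 : 0 < Rpower M' (/ b) by apply: exp_pos.
have [N [yN _]] := exists_nat_between (Rlt_le _ _ y_gt0).
exists N => n /leP /le_INR Nn.
apply: (Rle_lt_trans _ M'); first exact: Rmax_r.
have -> : M' = Rpower (Rpower M' (/ b)) b.
  by rewrite Rpower_mult Rinv_l ?Rpower_1 //; lra.
by apply: Rlt_Rpower_l => //; lra.
Qed.

Section ProbRM.
Variables (r n : nat).
Hypothesis r_gt0 : (0 < r)%N.
Implicit Types Q : {set {set 'I_(r * n)}} -> bool.

Lemma eq_prob_RM Q Q' : Q =1 Q' -> prob_RM Q = prob_RM Q'.
Proof.
move=> eqQ; rewrite /prob_RM.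
suff -> : [set M | is_matching M && Q M] = [set M | is_matching M && Q' M] by [].
by apply/setP => M; rewrite !inE eqQ.
Qed.

Lemma prob_RM_ge0 Q : 0 <= prob_RM Q.
Proof.
apply: Rmult_le_pos; first exact: pos_INR.
by apply/Rlt_le/Rinv_0_lt_compat/lt_0_INR/ltP; exact: card_matchings_gt0.
Qed.

Lemma prob_RMC Q : prob_RM (fun M => ~~ Q M) = 1 - prob_RM Q.
Proof.
have tot_gt0 : 0 < INR #|[set M : {set {set 'I_(r * n)}} | is_matching M]|.
  by apply/lt_0_INR/ltP; exact: card_matchings_gt0.
have := cardsID [set M | Q M] [set M : {set {set 'I_(r * n)}} | is_matching M].
have -> : [set M | is_matching M] :&: [set M | Q M] = [set M | is_matching M && Q M].
  by apply/setP => M; rewrite !inE.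
have -> : [set M | is_matching M] :\: [set M | Q M] =
    [set M | is_matching M && ~~ Q M] by apply/setP => M; rewrite !inE andbC.
move/(f_equal INR); rewrite plus_INR /prob_RM => split_tot.
rewrite -split_tot in tot_gt0 *.
set a := INR _ in tot_gt0 *; set b := INR _ in tot_gt0 *; field; lra.
Qed.

Lemma prob_RM_le1 Q : prob_RM Q <= 1.
Proof.
have := prob_RM_ge0 (fun M => ~~ Q M); rewrite prob_RMC; lra.
Qed.

End ProbRM.

Definition growth_const (r : nat) (C : R) : R := C * INR r`! * 3 ^ r / INR r ^ r.

Lemma growth_const_gt0 r C : (0 < r)%N -> 0 < C -> 0 < growth_const r C.
Proof.
move=> r_gt0 C_gt0; have r_pos : 0 < INR r by apply/lt_0_INR/ltP.
apply: Rmult_lt_0_compat; last by apply/Rinv_0_lt_compat/pow_lt.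
apply: Rmult_lt_0_compat; last by apply: pow_lt; lra.
by apply: Rmult_lt_0_compat => //; apply/lt_0_INR/ltP; exact: fact_gt0.
Qed.

Lemma prob_large_clique_le r (Pats : {set {set {set 'I_(r * 2)}}}) n k C x :
  (0 < r)%N -> (0 < n)%N -> (0 < k)%N -> 0 < C ->
  INR (aP Pats k) <= C ^ k * Rpower (INR k) (INR k * x) ->
  prob_RM (fun M : {set {set 'I_(r * n)}} => (k <= zP Pats M)%N) <=
  (growth_const r C * INR n / Rpower (INR k) (INR r - x)) ^ k.
Proof.
move=> r_gt0 n_gt0 k_gt0 C_gt0 aPk.
set K := INR k; set q := growth_const r C * INR n / _.
have K_gt0 : 0 < K by apply/lt_0_INR/ltP.
have r_pos : 0 < INR r by apply/lt_0_INR/ltP.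
set cnt := INR #|[set M : {set {set 'I_(r * n)}} | is_matching M && (k <= zP Pats M)%N]|.
set tot := INR #|[set M : {set {set 'I_(r * n)}} | is_matching M]|.
set F := INR (r * k)`!.
have tot_gt0 : 0 < tot by apply/lt_0_INR/ltP; exact: card_matchings_gt0.
have F_gt0 : 0 < F by apply/lt_0_INR/ltP; exact: fact_gt0.
have count_bound : cnt * F <= INR (aP Pats k) * (INR r`! * INR n) ^ k * tot.
  have := le_INR _ _ (leP (card_large_clique_matchings_le Pats r_gt0 k n_gt0)).
  by rewrite !INR_muln !INR_expn Rpow_mult_distr.
have aP_bound : INR (aP Pats k) <= (C * Rpower K x) ^ k.
  have Kx_pow : Rpower K x ^ k = Rpower K (K * x).
    by rewrite -Rpower_pow ?Rpower_mult ?(Rmult_comm x) //; exact: exp_pos.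
  by rewrite Rpow_mult_distr Kx_pow.
have q_eq : q * (INR r * K / 3) ^ r = C * Rpower K x * (INR r`! * INR n).
  have Kr : K ^ r = Rpower K (INR r - x) * Rpower K x.
    by rewrite -Rpower_plus -Rpower_pow //; congr Rpower; ring.
  have Krx_gt0 : 0 < Rpower K (INR r - x) by exact: exp_pos.
  rewrite /q /growth_const /Rdiv !Rpow_mult_distr Kr pow_inv.
  by field; repeat split; try apply: pow_nonzero; lra.
have fact_bound : (INR r * K / 3) ^ (r * k) <= F.
  by rewrite /F /K -INR_muln; exact: pow_div3_le_fact.
rewrite /prob_RM -/cnt -/tot.
apply: (Rmult_le_reg_r tot) => //; rewrite /Rdiv Rmult_assoc Rinv_l ?Rmult_1_r; last lra.
apply: (Rmult_le_reg_r F) => //; apply: (Rle_trans _ _ _ count_bound).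
have q_ge0 : 0 <= q ^ k.
  apply/pow_le/Rmult_le_pos; last exact/Rlt_le/Rinv_0_lt_compat/exp_pos.
  by apply: Rmult_le_pos; [apply/Rlt_le/growth_const_gt0 | apply: pos_INR].
have -> : q ^ k * tot * F = (q ^ k * F) * tot by ring.
apply: Rmult_le_compat_r; first lra.
apply: (Rle_trans _ ((C * Rpower K x) ^ k * (INR r`! * INR n) ^ k)).
  by apply: Rmult_le_compat_r => //; apply: pow_le; apply: Rmult_le_pos; apply: pos_INR.
rewrite -Rpow_mult_distr -q_eq Rpow_mult_distr -pow_mult.
by apply: Rmult_le_compat_l.
Qed.

Lemma prob_small_clique_ge r (Pats : {set {set {set 'I_(r * 2)}}}) C x n t :
  (0 < r)%N -> 0 < C -> x < INR r ->
  (forall k : nat, (2 <= k)%N ->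
     INR (aP Pats k) <= C ^ k * Rpower (INR k) (INR k * x)) ->
  0 < t -> Rpower t (INR r - x) = 2 * growth_const r C * INR n ->
  1 - / t <= prob_RM (fun M : {set {set 'I_(r * n)}} => Rleb (INR (zP Pats M)) t).
Proof.
move=> r_gt0 C_gt0 xr aP_le t_gt0 t_pow.
have p_ge0 := prob_RM_ge0 r_gt0
  (fun M : {set {set 'I_(r * n)}} => Rleb (INR (zP Pats M)) t).
have [t_lt1 | t_ge1] := Rlt_le_dec t 1.
  have := Rinv_lt_contravar t 1 (ltac:(lra)) t_lt1; rewrite Rinv_1; lra.
have [k [tk kt]] := exists_nat_between (Rlt_le _ _ t_gt0).
have k_ge2 : (2 <= k)%N by apply/ltP/INR_lt; rewrite /=; lra.
set a := INR r - x in t_pow *; have a_gt0 : 0 < a by rewrite /a; lra.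
have D_gt0 := growth_const_gt0 r_gt0 C_gt0.
have n_pos : 0 < INR n by have := exp_pos (a * ln t); rewrite -/(Rpower t a) t_pow; nra.
have n_gt0 : (0 < n)%N by apply/ltP/INR_lt.
rewrite (@eq_prob_RM r n _ (fun M => ~~ (k <= zP Pats M)%N)); last first.
  by move=> M; rewrite (Rleb_INR_nat _ (conj tk kt)) ltnNge.
rewrite prob_RMC //.
have := prob_large_clique_le r_gt0 n_gt0 (ltnW k_ge2) C_gt0 (aP_le k k_ge2).
set q := growth_const r C * INR n / Rpower (INR k) a.
have Ka_gt0 : 0 < Rpower (INR k) a by exact: exp_pos.
have q_half : 0 <= q <= / 2.
  have t_Ka : Rpower t a < Rpower (INR k) a by apply: Rlt_Rpower_l; lra.
  split; first by apply/Rlt_le/Rmult_lt_0_compat; [nra | exact: Rinv_0_lt_compat].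
  apply: (Rmult_le_reg_r (Rpower (INR k) a)) => //.
  rewrite /q /Rdiv Rmult_assoc Rinv_l; lra.
have qk_le : q ^ k <= / INR k.
  apply: (Rle_trans _ ((/ 2) ^ k)); first exact: pow_incr.
  exact: pow_inv2_le_inv (ltnW k_ge2).
have k_inv : / INR k < / t by apply: Rinv_lt_contravar => //; nra.
lra.
Qed.

Theorem lemma3p2 (r : nat) (Pats : {set {set {set 'I_(r * 2)}}}) (C x : R) :
  (2 <= r)%N ->
  (forall P, P \in Pats -> is_matching P) ->
  Rlt 0 C -> Rle 0 x -> Rlt x (INR r) ->
  (forall k : nat, (2 <= k)%N ->
     Rle (INR (aP Pats k)) (Rmult (pow C k) (Rpower (INR k) (Rmult (INR k) x)))) ->
  exists C'' : R, Rlt 0 C'' /\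
    Un_cv (fun n : nat =>
      prob_RM (r := r) (n := n) (fun M => Rleb (INR (zP Pats M))
                          (Rmult C'' (Rpower (INR n) (Rinv (Rminus (INR r) x)))))) R1.
Proof.
move=> r_ge2 _ C_gt0 _ xr aP_le; have r_gt0 : (0 < r)%N by exact: ltnW.
set a := Rminus (INR r) x; have a_gt0 : 0 < a by rewrite /a; lra.
set D := growth_const r C; have D_gt0 : 0 < D := growth_const_gt0 r_gt0 C_gt0.
exists (Rpower (2 * D) (/ a)); split; first exact: exp_pos.
set C'' := Rpower (2 * D) (/ a); have C''_gt0 : 0 < C'' by exact: exp_pos.
move=> eps eps_gt0.
have [N N_large] := Rpower_INR_unbounded (/ (C'' * eps)) (Rinv_0_lt_compat _ a_gt0).
exists N.+1 => n /leP Nn; have n_pos : 0 < INR n by apply/lt_0_INR/ltP/(leq_trans _ Nn).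
set t := Rmult C'' (Rpower (INR n) (/ a)).
have t_gt0 : 0 < t by apply: Rmult_lt_0_compat => //; exact: exp_pos.
have t_pow : Rpower t a = 2 * D * INR n.
  rewrite /t /C'' -Rpower_mult_distr; try exact: exp_pos.
  by rewrite !Rpower_mult Rinv_l ?Rpower_1; lra.
have := prob_small_clique_ge r_gt0 C_gt0 xr aP_le t_gt0 t_pow.
have := prob_RM_le1 r_gt0 (fun M : {set {set 'I_(r * n)}} => Rleb (INR (zP Pats M)) t).
have t_large : / eps < t.
  have -> : / eps = C'' * / (C'' * eps) by field; lra.
  by apply: Rmult_lt_compat_l => //; apply: N_large; exact: ltnW.
have : / t < eps.
  rewrite -(Rinv_inv eps); apply: Rinv_lt_contravar => //.
  by apply: Rmult_lt_0_compat => //; exact: Rinv_0_lt_compat.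
rewrite /R_dist; split_Rabs; lra.
Qed.
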